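(* Let $X$ be a (possibly large) category with a strict initial object $\mathsf{0}$, and let $L:\mathbf{Cat}\to\mathbf{Cat}/\!/X$ be the functor $L(W)=(W,\underline{\mathsf{0}})$, $L(f)=(f,\iota)$. Then $L$ is fully faithful and preserves limits of non-empty diagrams; in particular it preserves pullbacks and non-empty products. Moreover, $L$ preserves the terminal object if and only if $X$ is equivalent to the terminal category.
   Context: $\mathbf{Cat}$ denotes the category of small categories and functors. For a (possibly large) category $X$, the lax comma category $\mathbf{Cat}/\!/X$ has as objects pairs $(W,a)$ with $W$ a small category and $a:W\to X$ a functor; a morphism $(f,\gamma):(W,a)\to(Y,b)$ consists of a functor $f:W\to Y$ and a natural transformation $\gamma:a\Rightarrow b\circ f$. The composite of $(f,\gamma):(W,a)\to(Y,b)$ and $(g,\chi):(Y,b)\to(Z,c)$ is $(g\circ f,(\chi * f)\cdot\gamma)$, where $(\chi * f)_w=\chi_{f(w)}$, and the identity on $(W,a)$ is $(\mathrm{id}_W,\mathrm{id}_a)$. An initial object $\mathsf{0}$ is strict if every morphism $x\to\mathsf{0}$ in $X$ is an isomorphism. $\underline{\mathsf{0}}:W\to X$ denotes the functor constant at $\mathsf{0}$, and for a functor $f:W\to Y$, $\iota:\underline{\mathsf{0}}\Rightarrow\underline{\mathsf{0}}\circ f$ is the unique natural transformation. $L$ is left adjoint to the forgetful functor $U:\mathbf{Cat}/\!/X\to\mathbf{Cat}$, $(W,a)\mapsto W$, $(f,\gamma)\mapsto f$. *)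

From Stdlib Require Import ProofIrrelevance FunctionalExtensionality.

Set Universe Polymorphism.
Set Implicit Arguments.
Unset Strict Implicit.

Record Category := {
  ob :> Type;
  hom : ob -> ob -> Type;
  idm : forall x, hom x x;
  comp : forall x y z, hom y z -> hom x y -> hom x z;
  comp_assoc : forall x y z w (f : hom x y) (g : hom y z) (h : hom z w),
      comp h (comp g f) = comp (comp h g) f;
  comp_id_l : forall x y (f : hom x y), comp (idm y) f = f;
  comp_id_r : forall x y (f : hom x y), comp f (idm x) = f }.

Arguments hom {C} x y : rename.
Arguments idm {C} x : rename.
Arguments comp {C} {x y z} g f : rename.

Record Functor (C D : Category) := {
  fobj :> ob C -> ob D;
  fmap : forall x y, hom x y -> hom (fobj x) (fobj y);
  fmap_id : forall x, fmap (idm x) = idm (fobj x);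
  fmap_comp : forall x y z (f : hom x y) (g : hom y z),
      fmap (comp g f) = comp (fmap g) (fmap f) }.

Arguments fmap {C D} F {x y} f : rename.

Lemma functor_eq_intro (C D : Category) (o : ob C -> ob D)
  (m : forall x y, hom x y -> hom (o x) (o y)) p1 q1 p2 q2 :
  @Build_Functor C D o m p1 q1 = @Build_Functor C D o m p2 q2.
Proof.
  assert (p1 = p2) by apply proof_irrelevance; subst.
  assert (q1 = q2) by apply proof_irrelevance; subst. reflexivity.
Qed.

Definition Fid (C : Category) : Functor C C.
Proof.
  refine {| fobj := fun x => x; fmap := fun x y f => f |}; reflexivity.
Defined.

Definition Fcomp (C D E : Category) (G : Functor D E) (F : Functor C D)
  : Functor C E.
Proof.
  refine {| fobj := fun x => G (F x);
            fmap := fun x y f => fmap G (fmap F f) |}.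
  - intro x. rewrite !fmap_id. reflexivity.
  - intros. rewrite !fmap_comp. reflexivity.
Defined.

Record NatTrans (C D : Category) (F G : Functor C D) := {
  component :> forall x, hom (F x) (G x);
  naturality : forall x y (f : hom x y),
      comp (fmap G f) (component x) = comp (component y) (fmap F f) }.

Definition nat_iso (C D : Category) (F G : Functor C D) : Prop :=
  exists (a : NatTrans F G) (b : NatTrans G F),
    (forall x, comp (b x) (a x) = idm (F x)) /\
    (forall x, comp (a x) (b x) = idm (G x)).

Definition equivalent (C D : Category) : Prop :=
  exists (F : Functor C D) (G : Functor D C),
    nat_iso (Fcomp G F) (Fid C) /\ nat_iso (Fcomp F G) (Fid D).

Definition OneCat : Category.
Proof.
  refine {| ob := unit; hom := fun _ _ => unit; idm := fun _ => tt;
            comp := fun _ _ _ _ _ => tt |};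
  intros; repeat match goal with u : unit |- _ => destruct u end; reflexivity.
Defined.

Definition is_iso (C : Category) (x y : C) (h : hom x y) : Prop :=
  exists g : hom y x, comp g h = idm x /\ comp h g = idm y.

Definition is_initial (C : Category) (z : C) : Type :=
  forall x : C, { h : hom z x | forall h' : hom z x, h' = h }.

Definition strict_initial (C : Category) (z : C) : Prop :=
  forall (x : C) (h : hom x z), is_iso h.

Definition is_terminal (C : Category) (t : C) : Prop :=
  forall x : C, exists h : hom x t, forall h' : hom x t, h' = h.

Record Cone (J C : Category) (D : Functor J C) := {
  apex : ob C;
  leg : forall j, hom apex (D j);
  leg_nat : forall j j' (u : hom j j'), comp (fmap D u) (leg j) = leg j' }.

Arguments apex {J C D} c.
Arguments leg {J C D} c j.

Definition is_limit (J C : Category) (D : Functor J C) (K : Cone D) : Prop :=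
  forall K' : Cone D,
    exists h : hom (apex K') (apex K),
      (forall j, comp (leg K j) h = leg K' j) /\
      (forall h' : hom (apex K') (apex K),
          (forall j, comp (leg K j) h' = leg K' j) -> h' = h).

Definition map_cone (J C E : Category) (D : Functor J C) (F : Functor C E)
  (K : Cone D) : Cone (Fcomp F D).
Proof.
  refine (@Build_Cone J E (Fcomp F D) (F (apex K))
            (fun j => fmap F (leg K j)) _).
  intros j j' u. cbn. rewrite <- fmap_comp, leg_nat. reflexivity.
Defined.

Definition preserves_limit (J C E : Category) (D : Functor J C)
  (F : Functor C E) : Prop :=
  forall K : Cone D, is_limit K -> is_limit (map_cone F K).

Definition preserves_terminal (C E : Category) (F : Functor C E) : Prop :=
  forall t : C, is_terminal t -> is_terminal (F t).

Definition fully_faithful (C E : Category) (F : Functor C E) : Prop :=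
  forall x y : C,
    (forall f g : hom x y, fmap F f = fmap F g -> f = g) /\
    (forall h : hom (F x) (F y), exists f : hom x y, fmap F f = h).

Definition Cat : Category.
Proof.
  refine {| ob := Category; hom := Functor; idm := Fid;
            comp := fun _ _ _ G F => Fcomp G F |}.
  - intros. apply functor_eq_intro.
  - intros x y [o m p q]. apply functor_eq_intro.
  - intros x y [o m p q]. apply functor_eq_intro.
Defined.

Record LaxOb (X : Category) := {
  lob : Category;
  lmap : Functor lob X }.

(* a morphism (f, gamma) : (W,a) -> (Y,b): a functor f : W -> Y and a natural
   transformation gamma : a => b o f, written out componentwise *)
Record LaxMor (X : Category) (A B : LaxOb X) := {
  lf : Functor (lob A) (lob B);
  lgam : forall w, hom (lmap A w) (lmap B (lf w));
  lnat : forall w w' (u : hom w w'),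
      comp (fmap (lmap B) (fmap lf u)) (lgam w) = comp (lgam w') (fmap (lmap A) u) }.

Arguments lf {X A B} l.
Arguments lgam {X A B} l w.

Lemma laxmor_eq (X : Category) (A B : LaxOb X) (o : ob (lob A) -> ob (lob B))
  (m : forall x y, hom x y -> hom (o x) (o y)) p1 q1 p2 q2
  (g1 g2 : forall w, hom (lmap A w) (lmap B (o w))) n1 n2 :
  (forall w, g1 w = g2 w) ->
  @Build_LaxMor X A B (@Build_Functor _ _ o m p1 q1) g1 n1
  = @Build_LaxMor X A B (@Build_Functor _ _ o m p2 q2) g2 n2.
Proof.
  intro e.
  assert (p1 = p2) by apply proof_irrelevance; subst.
  assert (q1 = q2) by apply proof_irrelevance; subst.
  assert (g1 = g2) by (apply functional_extensionality_dep; exact e); subst.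
  assert (n1 = n2) by apply proof_irrelevance; subst. reflexivity.
Qed.

Definition laxid (X : Category) (A : LaxOb X) : LaxMor A A.
Proof.
  refine {| lf := Fid (lob A); lgam := fun w => idm (lmap A w) |}.
  intros. cbn. rewrite comp_id_l, comp_id_r. reflexivity.
Defined.

(* composite of (f,gamma) and (g,chi) is (g o f, (chi * f) . gamma) *)
Definition laxcomp (X : Category) (A B C : LaxOb X)
  (n : LaxMor B C) (m : LaxMor A B) : LaxMor A C.
Proof.
  refine {| lf := Fcomp (lf n) (lf m);
            lgam := fun w => comp (lgam n (lf m w)) (lgam m w) |}.
  intros w w' u. cbn.
  rewrite comp_assoc, lnat, <- comp_assoc, lnat, comp_assoc. reflexivity.
Defined.

Definition LaxSlice (X : Category) : Category.
Proof.
  refine {| ob := LaxOb X; hom := @LaxMor X; idm := @laxid X;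
            comp := fun _ _ _ n m => laxcomp n m |}.
  - intros A B C D [[o1 m1 p1 q1] g1 n1] [[o2 m2 p2 q2] g2 n2]
           [[o3 m3 p3 q3] g3 n3].
    apply laxmor_eq. intro w. cbn. apply comp_assoc.
  - intros A B [[o m p q] g n]. apply laxmor_eq. intro w. cbn.
    apply comp_id_l.
  - intros A B [[o m p q] g n]. apply laxmor_eq. intro w. cbn.
    apply comp_id_r.
Defined.

Definition constF (W X : Category) (z : X) : Functor W X.
Proof.
  refine {| fobj := fun _ => z; fmap := fun _ _ _ => idm z |}.
  - reflexivity.
  - intros. cbn. rewrite comp_id_l. reflexivity.
Defined.

Section L.
Context (X : Category) (z : X) (hz : is_initial z).

Definition iota : hom z z := proj1_sig (hz z).

Lemma iota_unique (h : hom z z) : h = iota.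
Proof. exact (proj2_sig (hz z) h). Qed.

Definition Lob (W : Category) : LaxOb X :=
  {| lob := W; lmap := constF W z |}.

Definition Lmor (W Y : Category) (f : Functor W Y) : LaxMor (Lob W) (Lob Y).
Proof.
  refine (@Build_LaxMor X (Lob W) (Lob Y) f (fun _ => iota) _).
  intros. cbn. rewrite (iota_unique (comp _ _)), (iota_unique (comp iota _)).
  reflexivity.
Defined.

Definition Lfun : Functor Cat (LaxSlice X).
Proof.
  refine (@Build_Functor Cat (LaxSlice X) Lob Lmor _ _).
  - intro W. cbn. unfold Lmor, laxid. cbn. apply laxmor_eq. intro w.
    symmetry. apply iota_unique.
  - intros W Y Z f g. cbn. unfold Lmor, laxcomp. cbn.
    destruct f as [o1 m1 p1 q1], g as [o2 m2 p2 q2]. cbn.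
    apply laxmor_eq. intro w. symmetry. apply iota_unique.
Defined.
End L.

(** A morphism into a strict initial object [0] is an isomorphism, so its
    source is itself initial; hence all parallel morphisms out of it agree.
    In particular every lax morphism into [L Y] has uniquely determined
    2-cell components, so it is determined by its underlying functor.  This
    gives full faithfulness at once, and reduces limits in [Cat//X] of cones
    with vertex [L Y] to limits in [Cat]: the only extra datum of a cone from
    [(W, a)], a family [a w -> 0], is supplied by any one leg, which is where
    non-emptiness of the diagram is needed.  Finally [L 1] is terminal iff
    every object of [X] maps to [0], i.e. iff every object of [X] is initial,
    i.e. iff [X] is equivalent to the terminal category. *)
From Stdlib Require Import ProofIrrelevance FunctionalExtensionality ClassicalEpsilon.

Set Universe Polymorphism.
Set Implicit Arguments.
Unset Strict Implicit.

Section StrictInitial.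
Context (X : Category) (z : X) (hz : is_initial z) (hstrict : strict_initial z).

Lemma hom_eq_of_hom_to_strict_initial (x y : X) (h : hom x z) (f g : hom x y) :
  f = g.
Proof.
  destruct (hstrict h) as [h' [h'h _]].
  assert (through_z : forall k : hom x y, k = comp (comp k h') h).
  { intro k. rewrite <- comp_assoc, h'h, comp_id_r. reflexivity. }
  rewrite (through_z f), (through_z g).
  rewrite (proj2_sig (hz y) (comp f h')), (proj2_sig (hz y) (comp g h')).
  reflexivity.
Qed.

Lemma hom_to_strict_initial_unique (x : X) (h k : hom x z) : h = k.
Proof. exact (hom_eq_of_hom_to_strict_initial h h k). Qed.

Lemma laxmor_to_Lob_eq (A : LaxOb X) (Y : Category) (m1 m2 : LaxMor A (Lob z Y)) :
  lf m1 = lf m2 -> m1 = m2.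
Proof.
  destruct m1 as [f g1 n1], m2 as [f2 g2 n2]; cbn; intros <-.
  assert (e : g1 = g2).
  { apply functional_extensionality_dep; intro w.
    apply hom_to_strict_initial_unique. }
  subst g2.
  f_equal; apply proof_irrelevance.
Qed.

Definition laxmor_to_Lob (A : LaxOb X) (Y : Category) (f : Functor (lob A) Y)
  (gam : forall w, hom (lmap A w) z) : LaxMor A (Lob z Y).
Proof.
  refine (@Build_LaxMor X A (Lob z Y) f gam _).
  intros; apply hom_to_strict_initial_unique.
Defined.

Lemma Lfun_fully_faithful : fully_faithful (Lfun hz).
Proof.
  intros W Y; split.
  - intros f g e. exact (f_equal (@lf _ _ _) e).
  - intro m. exists (lf m). apply laxmor_to_Lob_eq. reflexivity.
Qed.

Definition underlying_cone (J : Category) (D : Functor J Cat)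
  (K : Cone (Fcomp (Lfun hz) D)) : Cone D :=
  @Build_Cone J Cat D (lob (apex K)) (fun j => lf (leg K j))
    (fun j j' u => f_equal (@lf _ _ _) (leg_nat K u)).

Lemma Lfun_preserves_nonempty_limit (J : Category) (D : Functor J Cat) :
  inhabited (ob J) -> preserves_limit D (Lfun hz).
Proof.
  intros [j0] K HK K'.
  destruct (HK (underlying_cone K')) as [h [h_fac h_uniq]].
  exists (laxmor_to_Lob h (lgam (leg K' j0))); split.
  - intro j. apply laxmor_to_Lob_eq. exact (h_fac j).
  - intros h' h'_fac. apply laxmor_to_Lob_eq, h_uniq.
    intro j. exact (f_equal (@lf _ _ _) (h'_fac j)).
Qed.

End StrictInitial.

Definition thin (C : Category) : Prop := forall (x y : C) (f g : hom x y), f = g.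

Lemma nat_iso_into_thin (C D : Category) (F G : Functor C D) :
  thin D -> (forall x, hom (F x) (G x)) -> (forall x, hom (G x) (F x)) ->
  nat_iso F G.
Proof.
  intros hD a b.
  exists (@Build_NatTrans C D F G a (fun _ _ _ => hD _ _ _ _)),
         (@Build_NatTrans C D G F b (fun _ _ _ => hD _ _ _ _)).
  split; intro; apply hD.
Qed.

(* A universe-polymorphic copy of [OneCat], which lives in [Set] and so cannot
   serve as the terminal object of [Cat] at an arbitrary level. *)
Definition PointCat@{u v} : Category@{u v}.
Proof.
  refine {| ob := unit; hom := fun _ _ => unit; idm := fun _ => tt;
            comp := fun _ _ _ _ _ => tt |};
    intros; repeat match goal with u : unit |- _ => destruct u end; reflexivity.
Defined.

Lemma PointCat_thin : thin PointCat.
Proof. intros x y [] []; reflexivity. Qed.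

Definition toPoint (W : Category) : Functor W PointCat.
Proof.
  refine (@Build_Functor W PointCat (fun _ => tt) (fun _ _ _ => tt) _ _);
    reflexivity.
Defined.

Lemma toPoint_unique (W : Category) (F : Functor W PointCat) : F = toPoint W.
Proof.
  destruct F as [o m p q].
  assert (eo : o = fun _ => tt).
  { apply functional_extensionality; intro x; destruct (o x); reflexivity. }
  subst o.
  assert (em : m = fun _ _ _ => tt).
  { do 2 (apply functional_extensionality_dep; intro).
    apply functional_extensionality; intro f; destruct (m _ _ f); reflexivity. }
  subst m. apply functor_eq_intro.
Qed.

Lemma PointCat_terminal : is_terminal (C:=Cat) PointCat.
Proof. intro W. exists (toPoint W). apply toPoint_unique. Qed.

Section Terminal.
Context (X : Category) (z : X) (hz : is_initial z) (hstrict : strict_initial z).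

Lemma homs_to_initial_of_Lfun_preserves_terminal :
  preserves_terminal (Lfun hz) -> inhabited (forall x : X, hom x z).
Proof.
  intro HT.
  assert (hx : forall x : X, inhabited (hom x z)).
  { intro x.
    destruct (HT _ PointCat_terminal {| lob := PointCat; lmap := constF PointCat x |})
      as [m _].
    exact (inhabits (lgam m tt)). }
  exact (inhabits (fun x => epsilon (hx x) (fun _ => True))).
Qed.

Lemma equivalent_OneCat_of_homs_to_initial :
  inhabited (forall x : X, hom x z) -> equivalent X OneCat.
Proof.
  intros [hx].
  assert (hX : thin X).
  { intros x y. exact (hom_eq_of_hom_to_strict_initial hz hstrict (hx x)). }
  exists (toPoint X : Functor X OneCat), (constF OneCat z); split;
    apply nat_iso_into_thin.
  - exact hX.
  - intro x. exact (proj1_sig (hz x)).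
  - exact hx.
  - exact PointCat_thin.
  - intros []. exact tt.
  - intros []. exact tt.
Qed.

Lemma homs_to_initial_of_equivalent_OneCat :
  equivalent X OneCat -> inhabited (forall x : X, hom x z).
Proof.
  intros [F [G [[a [b _]] _]]].
  constructor; intro x.
  assert (e : F x = F z) by (destruct (F x), (F z); reflexivity).
  pose proof (b x) as bx; cbn in bx; rewrite e in bx.
  exact (comp (a z) bx).
Qed.

Lemma Lfun_preserves_terminal_of_homs_to_initial :
  inhabited (forall x : X, hom x z) -> preserves_terminal (Lfun hz).
Proof.
  intros [hx] t ht A.
  destruct (ht (lob A)) as [f f_uniq].
  exists (laxmor_to_Lob hz hstrict f (fun w => hx (lmap A w))).
  intro m. apply (laxmor_to_Lob_eq hz hstrict), f_uniq.
Qed.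

End Terminal.

Theorem mainTheorem10 (X : Category) (z : ob X)
  (hz : is_initial z) (hstrict : strict_initial z) :
  let L := Lfun hz in
  fully_faithful L /\
  (forall (J : Category) (D : Functor J Cat),
      inhabited (ob J) -> preserves_limit D L) /\
  (preserves_terminal L <-> equivalent X OneCat).
Proof.
  intro L; split; [|split].
  - exact (Lfun_fully_faithful hz hstrict).
  - exact (Lfun_preserves_nonempty_limit hstrict).
  - split; intro H.
    + apply (equivalent_OneCat_of_homs_to_initial hz hstrict).
      exact (homs_to_initial_of_Lfun_preserves_terminal H).
    + apply (Lfun_preserves_terminal_of_homs_to_initial hz hstrict).
      apply homs_to_initial_of_equivalent_OneCat, H.
Qed.
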